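(* Let $\mathcal{G}=(\mathcal{V},\mathcal{E})$ be an undirected graph with $|\mathcal{N}_i|\ge (d+1)F+1$ for every $i\in\mathcal{V}$, and suppose the misbehaving agents follow the $F$-local attack model. If $\mathcal{G}$ is $((d+1)F+1)$-robust, then when the benign agents run the resilient multi-dimensional consensus algorithm described in the context, all benign agents achieve consensus exponentially regardless of the actions of the misbehaving agents: there is $\bar{x}\in\mathbb{R}^d$ with $x^i(k)\to\bar{x}$ exponentially fast as $k\to\infty$ for all $i\in\mathcal{B}$.
   Context: $\mathcal{G}=(\mathcal{V},\mathcal{E})$ is undirected, $\mathcal{N}_i=\{j\in\mathcal{V}: e_{ij}\in\mathcal{E}\}$. $\mathcal{G}$ is $r$-robust if for every pair of disjoint nonempty subsets $\mathcal{V}_1,\mathcal{V}_2\subsetneq\mathcal{V}$, some agent in $\mathcal{V}_1$ has at least $r$ neighbors outside $\mathcal{V}_1$, or some agent in $\mathcal{V}_2$ has at least $r$ neighbors outside $\mathcal{V}_2$. $\mathcal{V}=\mathcal{B}\cup\mathcal{F}$ disjointly; $\mathcal{F}$ are misbehaving agents, which may send arbitrary (possibly different to different neighbors, possibly colluding) values at each time; $\mathcal{B}$ are benign agents following the algorithm. $F$-local attack model: $|\mathcal{F}\cap\mathcal{N}_i|\le F$ for all $i\in\mathcal{V}$. For a finite multiset $\mathcal{A}\subset\mathbb{R}^d$ of cardinality $m$ (counted with multiplicity) and integer $0\le n\le m$, let $\mathcal{S}(\mathcal{A},n)$ be the collection of all sub-multisets of $\mathcal{A}$ of cardinality $m-n$,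 and $\varPsi(\mathcal{A},n)=\bigcap_{S\in\mathcal{S}(\mathcal{A},n)}\mathrm{Conv}(S)$. Algorithm: each benign agent $i$ has state $x^i(k)\in\mathbb{R}^d$, $x^i(0)$ arbitrary. At each time $k$: (1) $i$ collects in the multiset $\mathcal{X}^i(k)$ the values received from all $j\in\mathcal{N}_i$; (2) with $p=(k \bmod d)+1$, it sorts the points of $\mathcal{X}^i(k)$ in ascending order of their $p$-th entries; (3) $\mathcal{Y}^i(k)$ is the multiset of the first $(d+1)F+1$ sorted points, and $y^i(k)$ is any point of $\varPsi(\mathcal{Y}^i(k),F)$; (4) $\mathcal{Z}^i(k)$ is the multiset of the last $(d+1)F+1$ sorted points, and $z^i(k)$ is any point of $\varPsi(\mathcal{Z}^i(k),F)$; (5) $x^i(k+1)=\frac{1}{3}\big(x^i(k)+y^i(k)+z^i(k)\big)$, which is sent to all neighbors. *)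

From HB Require Import structures.
From mathcomp Require Import all_boot all_order all_algebra.
From mathcomp Require Import reals.
Set Implicit Arguments. Unset Strict Implicit. Unset Printing Implicit Defensive.
Import Order.TTheory GRing.Theory Num.Theory.
Local Open Scope ring_scope.

Definition nbrs (V : finType) (e : rel V) (i : V) : {set V} := [set j | e i j].

Definition robust (V : finType) (e : rel V) (r : nat) : Prop :=
  forall V1 V2 : {set V}, V1 != set0 -> V2 != set0 ->
    V1 \proper [set: V] -> V2 \proper [set: V] -> [disjoint V1 & V2] ->
    (exists2 i, i \in V1 & (r <= #|nbrs e i :\: V1|)%N) \/
    (exists2 i, i \in V2 & (r <= #|nbrs e i :\: V2|)%N).

Definition F_local (V : finType) (e : rel V) (Fs : {set V}) (F : nat) : Prop :=
  forall i, (#|Fs :&: nbrs e i| <= F)%N.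

Definition conv_hull (R : numDomainType) (d : nat) (S : seq 'rV[R]_d) (x : 'rV[R]_d) : Prop :=
  exists w : 'I_(size S) -> R,
    (forall i, 0 <= w i) /\ \sum_i w i = 1 /\ x = \sum_i w i *: S`_i.

(* x \in Psi(A, n): x lies in Conv(S) for every sub-multiset S of A of
   cardinality |A| - n (sub-multisets are masks of A). *)
Definition Psi (R : numDomainType) (d : nat) (A : seq 'rV[R]_d) (n : nat) (x : 'rV[R]_d) : Prop :=
  forall b : bitseq, size b = size A -> count id b = (size A - n)%N ->
    conv_hull (mask b A) x.

(* The 0-based sorting
   coordinate is k mod d (i.e. p = (k mod d) + 1 in 1-based indexing). *)
Definition resilient_step (R : realFieldType) (d F k : nat) (hd : (0 < d)%N)
    (X : seq 'rV[R]_d) (xi xnext : 'rV[R]_d) : Prop :=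
  let p := Ordinal (ltn_pmod k hd) in
  let q := (d.+1 * F).+1 in
  exists s : seq 'rV[R]_d,
    perm_eq s X /\ sorted (fun a b : 'rV[R]_d => a 0 p <= b 0 p) s /\
    exists y z : 'rV[R]_d,
      Psi (take q s) F y /\ Psi (drop (size s - q) s) F z /\
      xnext = 3^-1 *: (xi + y + z).

(* Fix a coordinate c.  A benign agent has at most F faulty neighbours, so each of its windows
   Y, Z of (d+1)F+1 received points contains at least dF+1 benign points, and every point of
   Psi(Y,F) or Psi(Z,F) has its c-th coordinate between the extreme benign c-th coordinates:
   the interval [lo, hi] spanned by the benign c-th coordinates never grows.  At the times
   k = c (mod d) the points are sorted by coordinate c, so an agent having dF+1 benign
   neighbours with c-th coordinate at most thr gets y_c <= thr, and its next value is at most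
   (x_c + thr + hi)/3.  As in the scalar W-MSR analysis, ((d+1)F+1)-robustness then forces the
   benign agents above hi - eps_t or below lo + eps_t, where eps_t = (hi - lo)/(2 3^t), to lose
   a member at each such time while both sets are nonempty.  After T = d(2|V|+1) steps one of
   them is empty, so the interval has shrunk by the factor 1 - 1/(2 3^T); the nested
   geometrically shrinking intervals have a common point, which is the limit. *)

From HB Require Import structures.
From mathcomp Require Import classical_sets.
From mathcomp Require Import all_boot all_order all_algebra.
From mathcomp Require Import reals.
From mathcomp Require Import zify ring lra.
Import Order.TTheory GRing.Theory Num.Theory.
Local Open Scope ring_scope.

Set Implicit Arguments. Unset Strict Implicit. Unset Printing Implicit Defensive.

Section ConvexHullBounds.
Variables (R : numDomainType) (d : nat).
Implicit Types (S A : seq 'rV[R]_d) (y : 'rV[R]_d) (c : 'I_d) (thr : R).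

Lemma conv_hull_coord_le S y c thr :
  conv_hull S y -> all (fun v : 'rV[R]_d => v 0 c <= thr) S -> y 0 c <= thr.
Proof.
move=> [w [w_ge0 [w_sum ->]]] /allP S_le; rewrite summxE.
apply: (@le_trans _ _ (\sum_i w i * thr)); last by rewrite -mulr_suml w_sum mul1r.
apply: ler_sum => i _; rewrite mxE ler_wpM2l //.
exact: S_le (mem_nth 0 (ltn_ord i)).
Qed.

Lemma conv_hull_coord_ge S y c thr :
  conv_hull S y -> all (fun v : 'rV[R]_d => thr <= v 0 c) S -> thr <= y 0 c.
Proof.
move=> [w [w_ge0 [w_sum ->]]] /allP S_ge; rewrite summxE.
apply: (@le_trans _ _ (\sum_i w i * thr)); first by rewrite -mulr_suml w_sum mul1r.
apply: ler_sum => i _; rewrite mxE ler_wpM2l //.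
exact: S_ge (mem_nth 0 (ltn_ord i)).
Qed.

Lemma exists_mask_count (T : Type) (P : pred T) (s : seq T) (n : nat) :
  (n <= count P s)%N ->
  exists b : bitseq, [/\ size b = size s, count id b = n & all P (mask b s)].
Proof.
elim: s n => [|a s IH] [|n] //= n_le; first by exists [::].
- have [b [size_b count_b P_b]] := IH 0%N (leq0n _).
  by exists (false :: b); rewrite /= size_b count_b.
- case P_a: (P a) n_le => /= n_le.
    have [b [size_b count_b P_b]] := IH n n_le.
    by exists (true :: b); rewrite /= size_b count_b P_a.
  have [b [size_b count_b P_b]] := IH n.+1 n_le.
  by exists (false :: b); rewrite /= size_b count_b.
Qed.

Lemma Psi_coord_le A F y c thr :
  Psi A F y -> (size A - F <= count (fun v : 'rV[R]_d => (v 0 c <= thr)%R) A)%N ->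
  y 0 c <= thr.
Proof.
move=> Psi_y /exists_mask_count[b [size_b count_b P_b]].
exact: conv_hull_coord_le (Psi_y b size_b count_b) P_b.
Qed.

Lemma Psi_coord_ge A F y c thr :
  Psi A F y -> (size A - F <= count (fun v : 'rV[R]_d => (thr <= v 0 c)%R) A)%N ->
  thr <= y 0 c.
Proof.
move=> Psi_y /exists_mask_count[b [size_b count_b P_b]].
exact: conv_hull_coord_ge (Psi_y b size_b count_b) P_b.
Qed.

End ConvexHullBounds.

Lemma count_take_sorted (T : eqType) (r : rel T) (P : pred T) (s : seq T) (q : nat) :
  transitive r -> sorted r s -> (forall a b, r a b -> P b -> P a) ->
  (minn q (count P s) <= count P (take q s))%N.
Proof.
move=> r_trans s_sorted P_down.
have [|/allPn[b b_take NPb]] := boolP (all P (take q s)).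
  by rewrite all_count => /eqP ->; rewrite size_take_min; have := count_size P s; lia.
have /allrelP r_take_drop : allrel r (take q s) (drop q s).
  move: s_sorted; rewrite (sorted_pairwise r_trans) -{1}(cat_take_drop q s).
  by rewrite pairwise_cat => /and3P[].
have drop_NP : count P (drop q s) = 0%N.
  apply/eqP; rewrite -leqn0 leqNgt -has_count; apply/hasPn => a a_drop.
  by apply: contra NPb; apply: P_down (r_take_drop _ _ b_take a_drop).
by rewrite -{1}(cat_take_drop q s) count_cat drop_NP addn0 geq_minr.
Qed.

Lemma count_drop_sorted (T : eqType) (r : rel T) (P : pred T) (s : seq T) (q : nat) :
  transitive r -> sorted r s -> (forall a b, r a b -> P a -> P b) ->
  (minn q (count P s) <= count P (drop (size s - q) s))%N.
Proof.
move=> r_trans s_sorted P_up.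
rewrite -[count P (drop _ _)]count_rev -take_rev -(count_rev P s).
apply: (@count_take_sorted _ (fun a b => r b a)).
- by move=> a b c ba cb; apply: r_trans ba.
- by rewrite rev_sorted.
- by move=> a b; apply: P_up.
Qed.

Lemma count_enum_set (T : finType) (A : {set T}) (Q : pred T) :
  count Q (enum A) = #|[set j in A | Q j]|.
Proof.
rewrite -size_filter -(card_uniqP (filter_uniq Q (enum_uniq (mem A)))).
by apply: eq_card => j; rewrite inE mem_filter mem_enum andbC.
Qed.

Section ResilientStep.
Variables (R : realFieldType) (d F k : nat) (hd : (0 < d)%N).
Variables (V : finType) (e : rel V) (Fs : {set V}) (i : V) (msg x : V -> 'rV[R]_d).
Hypotheses (F_loc : F_local e Fs F) (deg_i : ((d.+1 * F).+1 <= #|nbrs e i|)%N).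
Hypothesis msg_benign : forall j, j \notin Fs -> msg j = x j.

Let X := [seq msg j | j <- enum (nbrs e i)].

Lemma count_msgs_faulty (P : pred 'rV[R]_d) :
  (forall j, j \notin Fs -> P (x j)) -> (count (predC P) X <= F)%N.
Proof.
move=> P_benign; rewrite count_map; apply: leq_trans (F_loc i).
apply: (@leq_trans (count (mem Fs) (enum (nbrs e i)))).
  apply: sub_count => j /=; apply: contraR => j_benign.
  by rewrite msg_benign // P_benign.
rewrite count_enum_set; apply/subset_leq_card/subsetP => j.
by rewrite !inE andbC.
Qed.

Lemma card_benign_le_count_msgs (P : pred 'rV[R]_d) :
  (#|[set j in nbrs e i | (j \notin Fs) && P (x j)]| <= count P X)%N.
Proof.
rewrite count_map -count_enum_set; apply: sub_count => j /= /andP[j_benign P_j].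
by rewrite msg_benign.
Qed.

(* [y] and [z] are the c-th coordinates of the points chosen in Psi(Y,F) and Psi(Z,F). *)
Lemma resilient_step_coord (xi xn : 'rV[R]_d) (c : 'I_d) :
  resilient_step F k hd X xi xn ->
  exists y z : R, xn 0 c = (xi 0 c + y + z) / 3 /\
  [/\ forall hi, (forall j, j \notin Fs -> x j 0 c <= hi) -> y <= hi /\ z <= hi,
      forall lo, (forall j, j \notin Fs -> lo <= x j 0 c) -> lo <= y /\ lo <= z,
      forall thr, (k %% d)%N = c ->
        ((d * F).+1 <= #|[set j in nbrs e i | (j \notin Fs) && (x j 0 c <= thr)%R]|)%N ->
        y <= thr &
      forall thr, (k %% d)%N = c ->
        ((d * F).+1 <= #|[set j in nbrs e i | (j \notin Fs) && (thr <= x j 0 c)%R]|)%N ->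
        thr <= z].
Proof.
move=> [s [s_X [s_sorted [y [z [Psi_y [Psi_z ->]]]]]]].
exists (y 0 c), (z 0 c); split; first by rewrite !mxE mulrC.
have := deg_i; set q := (d.+1 * F).+1 => q_le.
have size_s : size s = #|nbrs e i| by rewrite (perm_size s_X) size_map -cardE.
have size_take : size (take q s) = q.
  by rewrite size_take_min; apply/minn_idPl; rewrite size_s.
have size_drop : size (drop (size s - q) s) = q by rewrite size_drop size_s; lia.
have q_sub_F : (q - F = (d * F).+1)%N by rewrite /q mulSn; lia.
have window_count (W : seq 'rV[R]_d) (P : pred 'rV[R]_d) : subseq W s -> size W = q ->
    (forall j, j \notin Fs -> P (x j)) -> (q - F <= count P W)%N.
  move=> W_s size_W P_benign.
  have faulty_W : (count (predC P) W <= F)%N.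
    apply: leq_trans (leq_count_subseq _ W_s) _.
    by rewrite (permP s_X) count_msgs_faulty.
  by have := count_predC P W; lia.
have many_in_s (P : pred 'rV[R]_d) :
    ((d * F).+1 <= #|[set j in nbrs e i | (j \notin Fs) && P (x j)]|)%N ->
    ((d * F).+1 <= minn q (count P s))%N.
  move=> many; rewrite leq_min; apply/andP; split; first by rewrite /q mulSn; lia.
  by apply: leq_trans many _; rewrite (permP s_X); exact: card_benign_le_count_msgs.
have c_trans : transitive (fun a b : 'rV[R]_d => a 0 c <= b 0 c).
  by move=> ? ? ?; apply: le_trans.
have sorted_c : (k %% d)%N = c -> sorted (fun a b : 'rV[R]_d => a 0 c <= b 0 c) s.
  by move=> k_phase; rewrite (_ : c = Ordinal (ltn_pmod k hd)) //; apply: val_inj.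
split.
- move=> hi hi_b; split.
  + by apply: (Psi_coord_le Psi_y); rewrite size_take window_count ?take_subseq.
  + by apply: (Psi_coord_le Psi_z); rewrite size_drop window_count ?drop_subseq.
- move=> lo lo_b; split.
  + by apply: (Psi_coord_ge Psi_y); rewrite size_take window_count ?take_subseq.
  + by apply: (Psi_coord_ge Psi_z); rewrite size_drop window_count ?drop_subseq.
- move=> thr k_phase /(many_in_s (fun v => v 0 c <= thr)) many.
  apply: (Psi_coord_le Psi_y); rewrite size_take q_sub_F (leq_trans many) //.
  by apply: count_take_sorted c_trans (sorted_c k_phase) _ => a b; apply: le_trans.
- move=> thr k_phase /(many_in_s (fun v => thr <= v 0 c)) many.
  apply: (Psi_coord_ge Psi_z); rewrite size_drop q_sub_F (leq_trans many) //.
  by apply: count_drop_sorted c_trans (sorted_c k_phase) _ => a b ab /le_trans; apply.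
Qed.

End ResilientStep.

Lemma exists_addn_mod (a d c : nat) : (0 < d)%N -> (c < d)%N ->
  exists2 j, (j < d)%N & ((a + j) %% d)%N = c.
Proof.
move=> d_gt0 c_lt_d; exists ((c + (d - a %% d)) %% d)%N; first by rewrite ltn_pmod.
have a_mod := ltn_pmod a d_gt0.
rewrite modnDmr -modnDml (_ : a %% d + (c + (d - a %% d)) = c + d)%N; last by lia.
by rewrite modnDr modn_small.
Qed.

Definition shrink_period (d n : nat) : nat := (d * (2 * n).+1)%N.

Lemma disjoint_proper_setT (T : finType) (A B : {set T}) :
  [disjoint A & B] -> B != set0 -> A \proper [set: T].
Proof.
move=> AB /set0Pn[j j_B]; rewrite properT; apply/negP => /eqP A_T.
by move: (disjointFl AB j_B); rewrite A_T inE.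
Qed.

Section ScalarContraction.
Variables (R : realFieldType) (V : finType) (e : rel V) (Fs : {set V}) (F d c : nat).
Implicit Types (u : nat -> V -> R) (k t : nat) (i j : V) (lo hi thr : R).

Definition opp_traj u : nat -> V -> R := fun k i => - u k i.

Definition bounded_above u k hi := forall j, j \notin Fs -> u k j <= hi.

(* Lower bounds are handled through [opp_traj u]. *)
Definition upper_contraction u := forall k i hi, i \notin Fs -> bounded_above u k hi ->
  u k.+1 i <= (u k i + hi + hi) / 3 /\
  forall thr, (k %% d)%N = c ->
    ((d * F).+1 <= #|[set j in nbrs e i | (j \notin Fs) && (u k j <= thr)%R]|)%N ->
    u k.+1 i <= (u k i + hi + thr) / 3.

Definition box u k lo hi := bounded_above u k hi /\ bounded_above (opp_traj u) k (- lo).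

Definition above u k thr := [set i | (i \notin Fs) && (thr < u k i)].

Lemma bounded_above_shift u k t hi : upper_contraction u ->
  bounded_above u k hi -> bounded_above u (k + t) hi.
Proof.
move=> u_contr u_hi; elim: t => [|t IH]; first by rewrite addn0.
move=> j j_benign; rewrite addnS.
have [u_next _] := u_contr _ _ _ j_benign IH.
have := IH j j_benign; lra.
Qed.

Lemma box_shift u k t lo hi :
  upper_contraction u -> upper_contraction (opp_traj u) ->
  box u k lo hi -> box u (k + t) lo hi.
Proof. by move=> u_contr nu_contr [u_hi nu_lo]; split; apply: bounded_above_shift. Qed.

Lemma above_eq0 u k thr : above u k thr = set0 -> bounded_above u k thr.
Proof.
move=> above0 j j_benign; rewrite leNgt; apply/negP => lt_j.
by have := in_set0 j; rewrite -above0 inE j_benign lt_j.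
Qed.

Lemma above_succ_subset u k hi thr : upper_contraction u -> bounded_above u k hi ->
  above u k.+1 ((thr + hi + hi) / 3) \subset above u k thr.
Proof.
move=> u_contr u_hi; apply/subsetP => i; rewrite !inE => /andP[i_benign lt_i].
rewrite i_benign ltNge; apply/negP => u_le.
have [u_next _] := u_contr _ _ _ i_benign u_hi; lra.
Qed.

Hypothesis F_loc : F_local e Fs F.

(* Of the (d+1)F+1 outside neighbours at most F are faulty; the dF+1 benign ones are below
   [thr] and pull the next value of [i] below the next threshold. *)
Lemma above_succ_proper u k hi thr i : upper_contraction u -> bounded_above u k hi ->
  (k %% d)%N = c -> i \in above u k thr ->
  ((d.+1 * F).+1 <= #|nbrs e i :\: above u k thr|)%N ->
  above u k.+1 ((thr + hi + hi) / 3) \proper above u k thr.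
Proof.
move=> u_contr u_hi k_phase i_above many_out.
rewrite properE above_succ_subset //=; apply/subsetPn; exists i => //.
move: i_above; rewrite !inE => /andP[i_benign _]; rewrite i_benign /= -leNgt.
set low := [set j in nbrs e i | (j \notin Fs) && (u k j <= thr)%R].
have out_sub : nbrs e i :\: above u k thr \subset (Fs :&: nbrs e i) :|: low.
  apply/subsetP => j; rewrite !inE => /andP[j_out j_nbr]; rewrite j_nbr andbT /=.
  by case: (boolP (j \in Fs)) j_out => //= _; rewrite -leNgt.
have many_low : ((d * F).+1 <= #|low|)%N.
  have := subset_leq_card out_sub; rewrite cardsU; have := F_loc i.
  by move: many_out; rewrite mulSn; lia.
have [u_next u_pull] := u_contr _ _ _ i_benign u_hi.
have := u_pull _ k_phase many_low; have := u_hi i i_benign; lra.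
Qed.

Lemma above_disjoint u k ta tb : 0 <= ta + tb ->
  [disjoint above u k ta & above (opp_traj u) k tb].
Proof.
move=> t_ge0; rewrite -setI_eq0; apply/eqP/setP => i; rewrite !inE /opp_traj.
by apply/negP => /andP[/andP[_ lt_a] /andP[_ lt_b]]; lra.
Qed.

Hypothesis robust_e : robust e (d.+1 * F).+1.

Lemma above_pair_card_decrease u k hi hi' ta tb :
  upper_contraction u -> upper_contraction (opp_traj u) ->
  bounded_above u k hi -> bounded_above (opp_traj u) k hi' -> (k %% d)%N = c ->
  0 <= ta + tb -> above u k ta != set0 -> above (opp_traj u) k tb != set0 ->
  (#|above u k.+1 ((ta + hi + hi) / 3)| + #|above (opp_traj u) k.+1 ((tb + hi' + hi') / 3)|
     < #|above u k ta| + #|above (opp_traj u) k tb|)%N.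
Proof.
move=> u_contr nu_contr u_hi nu_hi k_phase t_ge0 top_ne0 bot_ne0.
have disj := above_disjoint u k t_ge0.
have [[i i_top out]|[i i_bot out]] := robust_e top_ne0 bot_ne0
  (disjoint_proper_setT disj bot_ne0)
  (disjoint_proper_setT (etrans (disjoint_sym _ _) disj) top_ne0) disj.
- rewrite -addSn leq_add ?subset_leq_card ?above_succ_subset //.
  exact: proper_card (above_succ_proper u_contr u_hi k_phase i_top out).
- rewrite -addnS leq_add ?subset_leq_card ?above_succ_subset //.
  exact: proper_card (above_succ_proper nu_contr nu_hi k_phase i_bot out).
Qed.

Hypotheses (d_gt0 : (0 < d)%N) (c_lt_d : (c < d)%N).

Lemma periodic_descent (mu : nat -> nat) (a m : nat) :
  (forall t, mu t.+1 <= mu t)%N ->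
  (forall t, (t < d * m)%N -> ((a + t) %% d)%N = c -> (mu t.+1 < mu t)%N) ->
  (mu (d * m) + m <= mu 0)%N.
Proof.
move=> mu_succ mu_desc.
have mu_anti : {homo mu : s t / (s <= t)%N >-> (t <= s)%N}.
  by apply: homo_leq => // ? ? ? /[swap]; apply: leq_trans.
elim: m mu_desc => [|m IH] mu_desc; first by rewrite muln0 addn0.
have [j j_lt_d phase_j] := exists_addn_mod (a + d * m) d_gt0 c_lt_d.
have desc_j : (mu (d * m + j).+1 < mu (d * m + j))%N.
  by apply: mu_desc; [lia | rewrite addnA].
have := IH (fun t t_lt => mu_desc t ltac:(lia)).
have := mu_anti (d * m)%N (d * m + j)%N (leq_addr _ _).
have := mu_anti (d * m + j).+1 (d * m.+1)%N ltac:(lia).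
lia.
Qed.

Local Notation T := (shrink_period d #|V|).

Lemma box_shrinks u k lo hi :
  upper_contraction u -> upper_contraction (opp_traj u) -> box u k lo hi ->
  exists lo' hi', box u (k + T) lo' hi' /\ hi' - lo' <= (1 - (2 * 3 ^+ T)^-1) * (hi - lo).
Proof.
move=> u_contr nu_contr box_k.
have box_t t : box u (k + t) lo hi by exact: box_shift.
have [W_le0 | W_gt0] := lerP (hi - lo) 0.
  have : 0 <= (2 * 3 ^+ T)^-1 :> R by rewrite invr_ge0 mulr_ge0 // exprn_ge0.
  by exists lo, hi; split; [exact: box_t | nra].
pose eps t : R := (hi - lo) / (2 * 3 ^+ t).
have eps_succ t : eps t.+1 = eps t / 3.
  by rewrite /eps exprS; field; rewrite expf_neq0 // pnatr_eq0.
have eps_le t : 2 * eps t <= hi - lo.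
  have X_ge2 : 2 <= 2 * 3 ^+ t :> R by rewrite ler_peMr // exprn_ege1 // ler1n.
  by rewrite /eps mulrA ler_pdivrMr ?(lt_le_trans _ X_ge2) //; nra.
pose top t := above u (k + t) (hi - eps t).
pose bot t := above (opp_traj u) (k + t) (- lo - eps t).
have top_thr t : hi - eps t.+1 = (hi - eps t + hi + hi) / 3 by rewrite eps_succ; lra.
have bot_thr t : - lo - eps t.+1 = (- lo - eps t - lo - lo) / 3 by rewrite eps_succ; lra.
have top_anti : {homo top : s t / (s <= t)%N >-> t \subset s}.
  apply: homo_leq => [A|B A C|t]; [exact: subxx | by move=> /[swap]; apply: subset_trans|].
  by rewrite /top addnS top_thr; apply: above_succ_subset (box_t t).1.
have bot_anti : {homo bot : s t / (s <= t)%N >-> t \subset s}.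
  apply: homo_leq => [A|B A C|t]; [exact: subxx | by move=> /[swap]; apply: subset_trans|].
  by rewrite /bot addnS bot_thr; apply: above_succ_subset (box_t t).2.
have [top_T0|top_ne0] := eqVneq (top T) set0.
  exists lo, (hi - eps T); split; first by split; [exact: above_eq0 | exact: (box_t T).2].
  by rewrite /eps; nra.
have [bot_T0|bot_ne0] := eqVneq (bot T) set0.
  exists (lo + eps T), hi; split.
    by split; [exact: (box_t T).1 | rewrite opprD; exact: above_eq0].
  by rewrite /eps; nra.
exfalso.
(* Both sets are nonempty up to time T, so mu <= 2|V| would drop 2|V|+1 times. *)
pose mu t := (#|top t| + #|bot t|)%N.
have mu_succ t : (mu t.+1 <= mu t)%N.
  apply: leq_add; apply: subset_leq_card.
  - exact: top_anti (leqnSn t).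
  - exact: bot_anti (leqnSn t).
have := @periodic_descent mu k (2 * #|V|).+1 mu_succ.
have := max_card (top 0%N); have := max_card (bot 0%N).
suff mu_desc : forall t, (t < T)%N -> ((k + t) %% d)%N = c -> (mu t.+1 < mu t)%N.
  by move=> top0 bot0 /(_ mu_desc); rewrite /mu; lia.
move=> t t_lt_T phase_t.
have top_t : top t != set0.
  by apply: contraNneq top_ne0 => top_t0; rewrite -subset0 -top_t0 top_anti // ltnW.
have bot_t : bot t != set0.
  by apply: contraNneq bot_ne0 => bot_t0; rewrite -subset0 -bot_t0 bot_anti // ltnW.
rewrite /mu /top /bot addnS top_thr bot_thr.
apply: above_pair_card_decrease (box_t t).1 (box_t t).2 phase_t _ top_t bot_t => //.
by have := eps_le t; lra.
Qed.

End ScalarContraction.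

Lemma bernoulli_inequality (R : realFieldType) (a : R) (n : nat) :
  a <= 1 -> 1 - n%:R * a <= (1 - a) ^+ n.
Proof.
move=> a_le1; elim: n => [|n IH]; first by rewrite mul0r subr0 expr0.
have n_ge0 : 0 <= n%:R :> R by [].
have := ler_wpM2l (_ : 0 <= 1 - a) IH; rewrite exprS -natr1 subr_ge0 => /(_ a_le1).
nra.
Qed.

Lemma bernoulli_root (R : realFieldType) (a : R) (T : nat) : (0 < T)%N -> 0 < a < 1 ->
  [/\ 0 < 1 - a / T%:R, 1 - a / T%:R < 1 & 1 - a <= (1 - a / T%:R) ^+ T].
Proof.
move=> T_gt0 /andP[a_gt0 a_lt1].
have aT_gt0 : 0 < a / T%:R by rewrite divr_gt0 // ltr0n.
have aT_le : a / T%:R <= a.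
  by rewrite ler_pdivrMr ?ltr0n // ler_peMr ?ler1n // ltW.
split; [lra | lra |]; apply: le_trans (bernoulli_inequality _ _); last lra.
by rewrite mulrCA mulfV ?mulr1 // pnatr_eq0 -lt0n.
Qed.

Lemma periodic_contraction_geometric (R : realFieldType) (Q : nat -> R -> Prop)
    (T : nat) (g rho W : R) :
  (0 < T)%N -> 0 < rho <= 1 -> g <= rho ^+ T -> 0 <= W ->
  (forall k w w', w <= w' -> Q k w -> Q k w') ->
  (forall k t w, Q k w -> Q (k + t)%N w) ->
  (forall k w, Q k w -> Q (k + T)%N (g * w)) ->
  Q 0%N W -> forall k, Q k (W / rho ^+ T * rho ^+ k).
Proof.
move=> T_gt0 /andP[rho_gt0 rho_le1] g_le W_ge0 Q_mono Q_shift Q_contr Q0.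
have rhoT_gt0 : 0 < rho ^+ T by rewrite exprn_gt0.
have C_ge0 : 0 <= W / rho ^+ T by rewrite divr_ge0 // ltW.
elim/ltn_ind => k IH; have [k_lt_T | T_le_k] := ltnP k T.
  apply: Q_mono (Q_shift 0%N k W Q0).
  rewrite mulrAC ler_pdivlMr // ler_wpM2l //.
  by apply: ler_wiXn2l (ltW rho_gt0) rho_le1 _ _ (ltnW k_lt_T).
have := Q_contr _ _ (IH (k - T)%N ltac:(lia)); rewrite subnK //; apply: Q_mono.
have -> : rho ^+ k = rho ^+ (k - T) * rho ^+ T by rewrite -exprD subnK.
by rewrite mulrC [_ / _ * (_ * _)]mulrA ler_wpM2l // mulr_ge0 // exprn_ge0 // ltW.
Qed.

Lemma intervals_common_point (R : realType) (S : set (R * R)) :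
  (forall p q, S p -> S q -> p.1 <= q.2) -> exists x, forall p, S p -> p.1 <= x <= p.2.
Proof.
move=> S_meet; exists (sup (fst @` S)%classic) => p Sp.
have ub_fst q : S q -> ubound (fst @` S)%classic q.2 by move=> Sq _ [p' Sp' <-]; exact: S_meet.
apply/andP; split.
- by apply: ub_le_sup; [exists p.2; exact: ub_fst | exists p].
- by apply: ge_sup; [exists p.1, p | exact: ub_fst].
Qed.

(* With a = 1/(2 3^T), Bernoulli's inequality gives (1 - a/T)^T >= 1 - a, the contraction
   factor of one period. *)
Definition consensus_rate (R : realFieldType) (d n : nat) : R :=
  1 - (2 * 3 ^+ shrink_period d n)^-1 / (shrink_period d n)%:R.

Section ScalarConsensus.
Variables (R : realType) (V : finType) (e : rel V) (Fs : {set V}) (F d c : nat).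
Hypotheses (F_loc : F_local e Fs F) (robust_e : robust e (d.+1 * F).+1).
Hypotheses (d_gt0 : (0 < d)%N) (c_lt_d : (c < d)%N).

Local Notation T := (shrink_period d #|V|).
Local Notation rho := (consensus_rate R d #|V|).

Lemma consensus_rate_bounds : 0 < rho < 1 /\ 1 - (2 * 3 ^+ T)^-1 <= rho ^+ T.
Proof.
have T_gt0 : (0 < T)%N by rewrite muln_gt0 d_gt0.
have X_gt1 : 1 < 2 * 3 ^+ T :> R.
  by rewrite (lt_le_trans (ltr_nat R 1 2)) // ler_peMr // exprn_ege1 // ler1n.
have a_bounds : 0 < (2 * 3 ^+ T : R)^-1 < 1.
  by rewrite invr_gt0 invf_lt1 ?X_gt1 ?andbT // (lt_trans ltr01).
by have [? ? ?] := bernoulli_root T_gt0 a_bounds; split => //; apply/andP.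
Qed.

Lemma scalar_consensus u lo hi :
  upper_contraction e Fs F d c u -> upper_contraction e Fs F d c (opp_traj u) ->
  lo <= hi -> box Fs u 0 lo hi ->
  exists ub : R, forall k i, i \notin Fs ->
    `|u k i - ub| <= (hi - lo) / rho ^+ T * rho ^+ k.
Proof.
move=> u_contr nu_contr lo_le_hi box0.
have [/andP[rho_gt0 rho_lt1] rho_T] := consensus_rate_bounds.
pose Q k w := exists lo' hi', box Fs u k lo' hi' /\ hi' - lo' <= w.
have Q_geo : forall k, Q k ((hi - lo) / rho ^+ T * rho ^+ k).
  apply: periodic_contraction_geometric rho_T _ _ _ _ _.
  - by rewrite muln_gt0 d_gt0.
  - by rewrite rho_gt0 ltW.
  - by rewrite subr_ge0.
  - by move=> k w w' le_w [lo' [hi' [box' wid]]]; exists lo', hi'; split; last exact: le_trans le_w.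
  - move=> k t w [lo' [hi' [box' wid]]]; exists lo', hi'; split => //.
    exact: (box_shift _ u_contr nu_contr box').
  - move=> k w [lo' [hi' [box' wid]]].
    have [lo'' [hi'' [box'' wid'']]] :=
      box_shrinks F_loc robust_e d_gt0 c_lt_d u_contr nu_contr box'.
    exists lo'', hi''; split => //; apply: le_trans wid'' _.
    rewrite ler_wpM2l // subr_ge0 invf_le1 ?mulr_ege1 ?exprn_ege1 ?ler1n //.
    by rewrite mulr_gt0 ?exprn_gt0.
  - by exists lo, hi.
have [i0 i0_benign | no_benign] := pickP (fun i => i \notin Fs); last first.
  by exists 0 => k i; rewrite no_benign.
have boxes_meet (p q : R * R) : (exists k, box Fs u k p.1 p.2) ->
    (exists k, box Fs u k q.1 q.2) -> p.1 <= q.2.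
  case: p q => [lo1 hi1] [lo2 hi2] [k1 box1] [k2 box2] /=.
  have [_ lo1_le] := box_shift k2 u_contr nu_contr box1.
  have [le_hi2 _] := box_shift k1 u_contr nu_contr box2.
  have := lo1_le i0 i0_benign; have := le_hi2 i0 i0_benign; rewrite /opp_traj addnC /=; lra.
have [ub ub_between] := intervals_common_point boxes_meet.
exists ub => k i i_benign.
have [lo' [hi' [[hi_b lo_b] wid]]] := Q_geo k.
have /andP[] := ub_between (lo', hi') (ex_intro _ k (conj hi_b lo_b)).
have := hi_b i i_benign; have := lo_b i i_benign; rewrite /opp_traj /=.
move=> *; rewrite ler_norml; apply/andP; split; lra.
Qed.

End ScalarConsensus.

Definition coord_traj (R : Type) (V : Type) (d : nat) (x : nat -> V -> 'rV[R]_d)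
  (c : 'I_d) : nat -> V -> R := fun k i => x k i 0 c.

Lemma resilient_coord_contraction (R : realFieldType) (d : nat) (hd : (0 < d)%N)
    (V : finType) (e : rel V) (F : nat) (Fs : {set V})
    (x : nat -> V -> 'rV[R]_d) (msg : nat -> V -> V -> 'rV[R]_d) (c : 'I_d) :
  (forall i : V, ((d.+1 * F).+1 <= #|nbrs e i|)%N) -> F_local e Fs F ->
  (forall k (j i : V), j \notin Fs -> msg k j i = x k j) ->
  (forall k (i : V), i \notin Fs ->
     resilient_step F k hd [seq msg k j i | j <- enum (nbrs e i)] (x k i) (x k.+1 i)) ->
  upper_contraction e Fs F d c (coord_traj x c) /\
  upper_contraction e Fs F d c (opp_traj (coord_traj x c)).
Proof.
move=> deg F_loc msg_benign step.
have coord k i : i \notin Fs -> _ := fun i_benign =>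
  resilient_step_coord F_loc (deg i) (fun j => msg_benign k j i) c (step k i i_benign).
rewrite /upper_contraction /bounded_above /opp_traj /coord_traj.
split=> k i hi i_benign hi_b.
- have [y [z [-> [yz_le _ y_thr _]]]] := coord k i i_benign.
  have [y_le z_le] := yz_le hi hi_b; split; first lra.
  by move=> thr k_phase /(y_thr thr k_phase); lra.
- have lo_b j : j \notin Fs -> - hi <= x k j 0 c by move=> /hi_b; rewrite lerNl.
  have [y [z [-> [_ yz_ge _ z_thr]]]] := coord k i i_benign.
  have [y_ge z_ge] := yz_ge _ lo_b; split; first lra.
  move=> thr k_phase many.
  have : (- thr <= z)%R.
    apply: z_thr k_phase (leq_trans many _).
    by apply/subset_leq_card/subsetP => j; rewrite !inE lerNl.
  lra.
Qed.

Unset Implicit Arguments.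

Theorem proposition2 (R : realType) (d : nat) (hd : (0 < d)%N)
    (V : finType) (e : rel V) (F : nat) (Fs : {set V})
    (x : nat -> V -> 'rV[R]_d) (msg : nat -> V -> V -> 'rV[R]_d) :
  symmetric e -> irreflexive e ->
  (forall i : V, ((d.+1 * F).+1 <= #|nbrs e i|)%N) ->
  F_local e Fs F ->
  robust e (d.+1 * F).+1 ->
  (* msg k j i : value sent by j to i at time k; benign agents send their state *)
  (forall k (j i : V), j \notin Fs -> msg k j i = x k j) ->
  (forall k (i : V), i \notin Fs ->
     resilient_step F k hd [seq msg k j i | j <- enum (nbrs e i)] (x k i) (x k.+1 i)) ->
  exists xbar : 'rV[R]_d, exists C rho : R,
    0 <= C /\ 0 <= rho < 1 /\
    forall (k : nat) (i : V), i \notin Fs ->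
      forall c : 'I_d, `|x k i 0 c - xbar 0 c| <= C * rho ^+ k.
Proof.
move=> _ _ deg F_loc robust_e msg_benign step.
pose K := \sum_i \sum_(c < d) `|x 0%N i 0 c|.
pose rho := consensus_rate R d #|V|.
pose C := (K + K) / rho ^+ shrink_period d #|V|.
have [/andP[rho_gt0 rho_lt1] _] := consensus_rate_bounds R V hd.
have K_ge0 : 0 <= K by do 2!apply: sumr_ge0 => ? _.
have x0_le_K i c : `|x 0%N i 0 c| <= K.
  rewrite /K (bigD1 i) //= (bigD1 c) //= -addrA lerDl.
  by rewrite addr_ge0 ?sumr_ge0 // => *; rewrite sumr_ge0.
have coord_cvg (c : 'I_d) : exists ub : R, forall k i, i \notin Fs ->
    `|x k i 0 c - ub| <= C * rho ^+ k.
  have [u_contr nu_contr] := resilient_coord_contraction c deg F_loc msg_benign step.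
  have box0 : box Fs (coord_traj x c) 0 (- K) K.
    split=> i _; have := x0_le_K i c;
    by rewrite /opp_traj /coord_traj ler_norml => /andP[? ?]; lra.
  have [ub ub_cvg] := scalar_consensus F_loc robust_e hd (ltn_ord c) u_contr nu_contr
    (ltac:(lra) : - K <= K) box0.
  exists ub => k i i_benign; have := ub_cvg k i i_benign.
  by rewrite opprK /C mulrAC.
have [ub ub_cvg] := fin_all_exists coord_cvg.
exists (\row_c ub c), C, rho; split; first by rewrite /C divr_ge0 ?addr_ge0 // exprn_ge0 // ltW.
split; first by rewrite ltW ?rho_gt0.
by move=> k i i_benign c; rewrite mxE; exact: ub_cvg.
Qed.
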